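(* Let $X,Y$ be sets of numbers with $X<Y$ and let $a=(A\mid B)$ be a number (so $(A\mid B)$ is a cut in $T_{g(a)}$). Then $a$ is the unique number of minimal generation among all numbers $z$ with $X<z<Y$ if and only if the following three conditions hold: (i) $X<a<Y$; (ii) for every $t\in A$ there exists $x\in X$ with $x\geqslant t$; (iii) for every $t\in B$ there exists $y\in Y$ with $y\leqslant t$.
   Context: For a totally ordered set $E$, a cut in $E$ is a pair $(A\mid B)$ of subsets of $E$ with $A\cap B=\emptyset$, $A\cup B=E$ and $a\leqslant b$ for all $a\in A$, $b\in B$. The set $\mathcal C(E)$ of cuts is totally ordered by $(A\mid B)\leqslant (C\mid D)$ iff $A\subset C$. The amalgam $E\cup\mathcal C(E)$ (with $E$ and $\mathcal C(E)$ regarded as disjoint) is totally ordered by combining the orders on $E$ and on $\mathcal C(E)$ with the rule: for $x\in E$ and $c=(A\mid B)\in\mathcal C(E)$, $x<c$ if $x\in A$ and $c<x$ if $x\in B$. Numbers are built by transfinite recursion on ordinals $\alpha$: $T_\alpha=\bigcup_{\beta<\alpha}S_\beta$ (a totally ordered set), $S_\alpha=\mathcal C(T_\alpha)$ is the set of cuts in $T_\alpha$, and $T_{\alpha+1}=T_\alpha\cup S_\alpha$ carries the amalgam order. The class of numbers is $\mathsf S=\bigcup_\alpha S_\alpha$ with the resulting total order; the elements of $S_\alpha$ are the numbers of generation $\alpha$, written $g(a)=\alpha$. For sets of numbers, $X<z$ means $x<z$ for all $x\in X$, and $z<Y$ means $z<y$ for all $y\in Y$. For sets $X<Y$ of numbers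 there always exists a unique number of minimal generation among the numbers $z$ with $X<z<Y$. *)

From Stdlib Require Import Relations Wellfounded.

(* Generations are indexed by "ordinals": an arbitrary type [O] with a   *)
(* well-founded strict total order [ltO].                                *)
Definition is_ordinal_type (O : Type) (ltO : O -> O -> Prop) : Prop :=
  well_founded ltO /\
  (forall a b c, ltO a b -> ltO b c -> ltO a c) /\
  (forall a, ~ ltO a a) /\
  (forall a b, ltO a b \/ a = b \/ ltO b a).

Definition is_cut {N : Type} (lt : N -> N -> Prop) (E A B : N -> Prop) : Prop :=
  (forall x, ~ (A x /\ B x)) /\
  (forall x, E x <-> (A x \/ B x)) /\
  (forall a b, A a -> B b -> lt a b \/ a = b).

Section NumberSystem.
Context {O : Type} (ltO : O -> O -> Prop) {N : Type}
        (lt : N -> N -> Prop) (g : N -> O).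

(* T_alpha = union of S_beta for beta < alpha. *)
Definition T (alpha : O) (x : N) : Prop := ltO (g x) alpha.

(* The cut (A | B) of T_{g(a)} that the number a is. Via the amalgam   *)
(* order, t < a iff t \in A and a < t iff t \in B, for t in T_{g(a)}.   *)
Definition cutL (a : N) (t : N) : Prop := T (g a) t /\ lt t a.
Definition cutR (a : N) (t : N) : Prop := T (g a) t /\ lt a t.

(* (N, lt, g) is the class of numbers S built by the recursion:          *)
(*  - lt is a strict total order on N (= the union of the orders on T_a) *)
(*  - for every alpha, a |-> (cutL a | cutR a) is a bijection from       *)
(*    S_alpha = {a | g a = alpha} onto the cuts C(T_alpha)               *)
(*  - this bijection is an order isomorphism for the cut order           *)
(*    ((A|B) < (C|D) iff A is a proper subset of C).                    *)
(*  The order between numbers of different generations is the amalgam    *)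
(*  order, built into the definition of cutL / cutR.                      *)
Definition is_number_system : Prop :=
  is_ordinal_type O ltO /\
  (forall x, ~ lt x x) /\
  (forall x y z, lt x y -> lt y z -> lt x z) /\
  (forall x y, lt x y \/ x = y \/ lt y x) /\
  (forall a, is_cut lt (T (g a)) (cutL a) (cutR a)) /\
  (forall (alpha : O) (A B : N -> Prop), is_cut lt (T alpha) A B ->
     exists a, g a = alpha /\ (forall t, cutL a t <-> A t) /\
               (forall t, cutR a t <-> B t) /\
       forall a', g a' = alpha -> (forall t, cutL a' t <-> A t) -> a' = a) /\
  (forall a b, g a = g b ->
     (lt a b <-> ((forall t, cutL a t -> cutL b t) /\
                  exists t, cutL b t /\ ~ cutL a t))).

Definition between (X Y : N -> Prop) (z : N) : Prop :=
  (forall x, X x -> lt x z) /\ (forall y, Y y -> lt z y).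

Definition unique_min_gen_between (X Y : N -> Prop) (a : N) : Prop :=
  between X Y a /\
  (forall z, between X Y z -> ltO (g a) (g z) \/ g a = g z) /\
  (forall z, between X Y z -> g z = g a -> z = a).

End NumberSystem.

(* Below the minimal generation everything is decided by the cut (A | B) of a:
   a number z with g z < g a lies in A or in B, and conditions (ii) and (iii)
   say precisely that such a z is then not strictly between X and Y.  Two
   distinct numbers of the same generation are separated by a number of lower
   generation (the element witnessing the proper inclusion of their left
   sets), and since the set of numbers between X and Y is convex, a second
   candidate of generation g a would produce one of lower generation. *)

From Stdlib Require Import Classical.

Section NumberSystemFacts.

Context {O : Type} {ltO : O -> O -> Prop} {N : Type}
        {lt : N -> N -> Prop} {g : N -> O}.
Hypothesis HS : is_number_system ltO lt g.

Lemma ltO_irrefl {alpha} : ~ ltO alpha alpha.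
Proof. destruct HS as [[_ [_ [H _]]] _]. apply H. Qed.

Lemma ltO_trans {alpha beta gamma} :
  ltO alpha beta -> ltO beta gamma -> ltO alpha gamma.
Proof. destruct HS as [[_ [H _]] _]. apply H. Qed.

Lemma ltO_total alpha beta : ltO alpha beta \/ alpha = beta \/ ltO beta alpha.
Proof. destruct HS as [[_ [_ [_ H]]] _]. apply H. Qed.

Lemma ltO_geF {alpha beta} : ltO alpha beta -> ltO beta alpha \/ beta = alpha -> False.
Proof.
  intros Hab [Hba | ->].
  - exact (ltO_irrefl (ltO_trans Hab Hba)).
  - exact (ltO_irrefl Hab).
Qed.

Lemma lt_irrefl {x} : ~ lt x x.
Proof. destruct HS as [_ [H _]]. apply H. Qed.

Lemma lt_trans {x y z} : lt x y -> lt y z -> lt x z.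
Proof. destruct HS as [_ [_ [H _]]]. apply H. Qed.

Lemma lt_total x y : lt x y \/ x = y \/ lt y x.
Proof. destruct HS as [_ [_ [_ [H _]]]]. apply H. Qed.

Lemma lt_leF {x y} : lt x y -> lt y x \/ y = x -> False.
Proof.
  intros Hxy [Hyx | ->].
  - exact (lt_irrefl (lt_trans Hxy Hyx)).
  - exact (lt_irrefl Hxy).
Qed.

Lemma lower_gen_cut {a z} :
  ltO (g z) (g a) -> cutL ltO lt g a z \/ cutR ltO lt g a z.
Proof.
  destruct HS as [_ [_ [_ [_ [Hcut _]]]]].
  destruct (Hcut a) as [_ [HT _]]. apply HT.
Qed.

Lemma exists_lower_gen_between {u v} :
  g u = g v -> lt u v -> exists t, ltO (g t) (g u) /\ lt u t /\ lt t v.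
Proof.
  destruct HS as [_ [_ [_ [_ [_ [_ Hgen]]]]]].
  intros Huv Hlt.
  destruct (proj1 (Hgen u v Huv) Hlt) as [_ [t [[Ht Htv] Htu]]].
  unfold T in Ht. rewrite <- Huv in Ht.
  exists t. split; [exact Ht |]. split; [| exact Htv].
  destruct (lt_total t u) as [H | [-> | H]].
  - exfalso. apply Htu. split; [exact Ht | exact H].
  - exfalso. exact (ltO_irrefl Ht).
  - exact H.
Qed.

Context {X Y : N -> Prop}.

Lemma between_convex {u v t} :
  between lt X Y u -> between lt X Y v -> lt u t -> lt t v -> between lt X Y t.
Proof.
  intros [HXu _] [_ HYv] Hut Htv. split.
  - intros x Hx. exact (lt_trans (HXu x Hx) Hut).
  - intros y Hy. exact (lt_trans Htv (HYv y Hy)).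
Qed.

Lemma below_or_exists_ge t :
  (forall x, X x -> lt x t) \/ exists x, X x /\ (lt t x \/ t = x).
Proof.
  destruct (classic (exists x, X x /\ (lt t x \/ t = x))) as [H | Hn]; [now right |].
  left. intros x Hx.
  destruct (lt_total x t) as [H | H]; [exact H |].
  exfalso. apply Hn. exists x. split; [exact Hx |].
  destruct H as [-> | H]; [now right | now left].
Qed.

Lemma above_or_exists_le t :
  (forall y, Y y -> lt t y) \/ exists y, Y y /\ (lt y t \/ y = t).
Proof.
  destruct (classic (exists y, Y y /\ (lt y t \/ y = t))) as [H | Hn]; [now right |].
  left. intros y Hy.
  destruct (lt_total t y) as [H | H]; [exact H |].
  exfalso. apply Hn. exists y. split; [exact Hy |].
  destruct H as [-> | H]; [now right | now left].
Qed.

Section CofinalCut.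

Context {a : N}.
Hypothesis HA : forall t, cutL ltO lt g a t -> exists x, X x /\ (lt t x \/ t = x).
Hypothesis HB : forall t, cutR ltO lt g a t -> exists y, Y y /\ (lt y t \/ y = t).

Lemma between_not_lower_gen {z} : between lt X Y z -> ~ ltO (g z) (g a).
Proof.
  intros [HXz HYz] Hz.
  destruct (lower_gen_cut Hz) as [HzA | HzB].
  - destruct (HA z HzA) as [x [Hx Hzx]]. exact (lt_leF (HXz x Hx) Hzx).
  - destruct (HB z HzB) as [y [Hy Hyz]]. exact (lt_leF (HYz y Hy) Hyz).
Qed.

Lemma between_same_gen_eq {z} :
  between lt X Y a -> between lt X Y z -> g z = g a -> z = a.
Proof.
  intros Ha Hz Hg.
  destruct (lt_total z a) as [Hza | [Hza | Haz]]; [| exact Hza |].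
  - destruct (exists_lower_gen_between Hg Hza) as [t [Ht [Hzt Hta]]].
    rewrite Hg in Ht.
    destruct (between_not_lower_gen (between_convex Hz Ha Hzt Hta) Ht).
  - destruct (exists_lower_gen_between (eq_sym Hg) Haz) as [t [Ht [Hat Htz]]].
    destruct (between_not_lower_gen (between_convex Ha Hz Hat Htz) Ht).
Qed.

End CofinalCut.

Section MinimalGeneration.

Context {a : N}.
Hypothesis Hmin : unique_min_gen_between ltO lt g X Y a.

Lemma min_gen_cutL_cofinal t :
  cutL ltO lt g a t -> exists x, X x /\ (lt t x \/ t = x).
Proof.
  destruct Hmin as [[_ HYa] [Hge _]]. intros [Ht Hta].
  destruct (below_or_exists_ge t) as [HXt | Hx]; [| exact Hx].
  exfalso. apply (ltO_geF Ht), Hge. split; [exact HXt |].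
  intros y Hy. exact (lt_trans Hta (HYa y Hy)).
Qed.

Lemma min_gen_cutR_cofinal t :
  cutR ltO lt g a t -> exists y, Y y /\ (lt y t \/ y = t).
Proof.
  destruct Hmin as [[HXa _] [Hge _]]. intros [Ht Hat].
  destruct (above_or_exists_le t) as [HYt | Hy]; [| exact Hy].
  exfalso. apply (ltO_geF Ht), Hge. split; [| exact HYt].
  intros x Hx. exact (lt_trans (HXa x Hx) Hat).
Qed.

End MinimalGeneration.

End NumberSystemFacts.

Theorem mainTheorem3 (O : Type) (ltO : O -> O -> Prop) (N : Type)
    (lt : N -> N -> Prop) (g : N -> O)
    (HS : is_number_system ltO lt g)
    (X Y : N -> Prop) (HXY : forall x y, X x -> Y y -> lt x y) (a : N) :
  unique_min_gen_between ltO lt g X Y a <->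
  (between lt X Y a /\
   (forall t, cutL ltO lt g a t -> exists x, X x /\ (lt t x \/ t = x)) /\
   (forall t, cutR ltO lt g a t -> exists y, Y y /\ (lt y t \/ y = t))).
Proof.
  split.
  - intros Hmin. split; [exact (proj1 Hmin) |]. split.
    + exact (min_gen_cutL_cofinal HS Hmin).
    + exact (min_gen_cutR_cofinal HS Hmin).
  - intros [Ha [HA HB]]. split; [exact Ha |]. split.
    + intros z Hz.
      destruct (ltO_total HS (g a) (g z)) as [H | [H | H]]; [now left | now right |].
      destruct (between_not_lower_gen HS HA HB Hz H).
    + intros z Hz Hg. exact (between_same_gen_eq HS HA HB Ha Hz Hg).
Qed.
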